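(* With the reduced expression $t(\lambda_-)=u\,s_{\ell_1}\cdots s_{\ell_L}$ and roots $\tilde\beta_k$ as in the context, for every $1\le k\le M$ one has $w_\circ\overline{\tilde\beta_k}=\beta_k^\vee$, where $\beta_k=s_{i_N}\cdots s_{i_{k+1}}\alpha_{i_k}$.
   Context: Setting: $\mathfrak g$ finite-dimensional simple Lie algebra, simple roots $\{\alpha_i\}_{i\in I}$, simple coroots $\{\alpha_i^\vee\}$, roots $\Delta=\Delta^+\sqcup\Delta^-$, weights $P$, dominant weights $P^+$, Weyl group $W$, longest element $w_\circ$. For $\lambda\in P^+$: $S=\{i:\langle\lambda,\alpha_i^\vee\rangle=0\}$, $W_S=\langle s_i:i\in S\rangle$ with longest element $w_\circ^S$, $\Delta^+_S$ the positive roots in $\sum_{i\in S}\mathbb Z\alpha_i$; $\lambda_-=w_\circ\lambda$; $v(\lambda_-)$ the minimal-length element of $\{x\in W: x\lambda=\lambda_-\}$, so $w_\circ=v(\lambda_-)w_\circ^S$ with lengths adding. Fix reduced expressions $v(\lambda_-)=s_{i_1}\cdots s_{i_M}$ and $w_\circ^S=s_{i_{M+1}}\cdots s_{i_N}$, so $w_\circ=s_{i_1}\cdots s_{i_N}$ is reduced; put $\beta_j=s_{i_N}\cdots s_{i_{j+1}}\alpha_{i_j}$; then $\Delta^+\setminus\Delta^+_S=\{\beta_1,\dots,\beta_M\}$, and the total order $\prec$ on $\Delta^+$ is $\beta_1\succ\beta_2\succ\dots\succ\beta_N$. Affine: real roots of the untwisted affinization of the dual root system $\widetilde\Delta_{\rm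 aff}=\{\alpha^\vee+a\tilde\delta\}$, positive ones $\widetilde\Delta^+_{\rm aff}$ ($a>0$, or $a=0,\alpha\in\Delta^+$), $\widetilde\Delta^-_{\rm aff}=-\widetilde\Delta^+_{\rm aff}$; simple roots $\alpha_i^\vee$ ($i\in I$), $\alpha_0^\vee=\tilde\delta-\varphi^\vee$ ($\varphi$ highest short root), $I_{\rm aff}=I\sqcup\{0\}$; $\beta=\bar\beta+\deg(\beta)\tilde\delta$ with $\bar\beta\in\mathfrak h$. $W_{\rm ext}=t(P)\rtimes W$ acting by $v\,t(\nu)(\bar\beta+r\tilde\delta)=v\bar\beta+(r-\langle\nu,\bar\beta\rangle)\tilde\delta$; $\ell(x)=\#(\widetilde\Delta^+_{\rm aff}\cap x^{-1}\widetilde\Delta^-_{\rm aff})$; $\Omega$ the length-zero elements. The map $\Phi:\widetilde\Delta^+_{\rm aff}\cap t(\lambda_-)^{-1}\widetilde\Delta^-_{\rm aff}\to\mathbb Q_{\ge0}\times(\Delta^+\setminus\Delta^+_S)$, $\Phi(\beta)=\Big(\frac{\langle\lambda_-,\bar\beta\rangle-\deg(\beta)}{\langle\lambda_-,\bar\beta\rangle},\,w_\circ(\bar\beta)^\vee\Big)$ (where $(\alpha^\vee)^\vee=\alpha$) is injective. Order the target lexicographically: $(a,\alpha)<(b,\beta)$ iff $a<b$, or $a=b$ and $\alpha\succ\beta$; $\prec'$ is the pullback order. The reduced expression $t(\lambda_-)=u\,s_{\ell_1}\cdots s_{\ell_L}$ ($u\in\Omega$, $\ell_k\in I_{\rm aff}$)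 is the unique one with $\tilde\beta_j:=s_{\ell_L}\cdots s_{\ell_{j+1}}\alpha^\vee_{\ell_j}$ satisfying $\tilde\beta_1\prec'\dots\prec'\tilde\beta_L$ exhausting $\widetilde\Delta^+_{\rm aff}\cap t(\lambda_-)^{-1}\widetilde\Delta^-_{\rm aff}$. *)

From HB Require Import structures.
From mathcomp Require Import all_boot all_order all_algebra.
Set Implicit Arguments. Unset Strict Implicit. Unset Printing Implicit Defensive.
Import Order.TTheory GRing.Theory Num.Theory.
Local Open Scope ring_scope.

(* Conventions:
   - rank n, index set I = 'I_n, Cartan matrix A with A i j = <alpha_i^vee, alpha_j>;
   - d : symmetrizer, (alpha_i, alpha_j) := d i * A i j;
   - a root is stored in simple-root coordinates, a (co)root of the dual system
     (element of the coroot lattice) in simple-coroot coordinates, a weight in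
     fundamental-weight coordinates; all as 'rV[int]_n. *)

Section RootData.
Variables (n : nat) (A : 'M[int]_n) (d : 'I_n -> int).

Definition vec := 'rV[int]_n.

(* unit vector: alpha_i (root coords) or alpha_i^vee (coroot coords) *)
Definition ev (i : 'I_n) : vec := \row_j (((i == j) : nat)%:R).

(* simple root alpha_i in fundamental-weight coordinates *)
Definition alphaW (i : 'I_n) : vec := \row_k A k i.

(* pairing weight x coroot lattice *)
Definition pairWC (lam g : vec) : int := \sum_i lam 0 i * g 0 i.
(* pairing root lattice x coroot lattice: <alpha_j, alpha_i^vee> = A i j *)
Definition pairRC (c g : vec) : int := \sum_i \sum_j g 0 i * A i j * c 0 j.
Definition form (x y : vec) : int := \sum_i \sum_j x 0 i * d i * A i j * y 0 j.

(* simple reflections on the root lattice, coroot lattice, weight lattice *)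
Definition sR (i : 'I_n) (c : vec) : vec := c - pairRC c (ev i) *: ev i.
Definition sC (i : 'I_n) (g : vec) : vec := g - pairRC (ev i) g *: ev i.
Definition sW (i : 'I_n) (lam : vec) : vec := lam - lam 0 i *: alphaW i.

(* a word [:: i1; ...; ik] acts as s_{i1} o ... o s_{ik} *)
Definition actR (w : seq 'I_n) (c : vec) : vec := foldr sR c w.
Definition actC (w : seq 'I_n) (g : vec) : vec := foldr sC g w.
Definition actW (w : seq 'I_n) (lam : vec) : vec := foldr sW lam w.

(* equality in the Weyl group W (faithful action on the weight lattice) *)
Definition w_eq (s t : seq 'I_n) : Prop := forall lam, actW s lam = actW t lam.

Definition reduced_word (s : seq 'I_n) : Prop :=
  forall t, w_eq t s -> (size s <= size t)%N.
Definition longest_word (w0 : seq 'I_n) : Prop :=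
  reduced_word w0 /\ forall s, exists t, w_eq t s /\ (size t <= size w0)%N.
Definition in_parabolic (S : {set 'I_n}) (s : seq 'I_n) : Prop :=
  exists t, all (fun i => i \in S) t /\ w_eq t s.
Definition longest_parabolic_word (S : {set 'I_n}) (ws : seq 'I_n) : Prop :=
  reduced_word ws /\ in_parabolic S ws /\
  forall s, in_parabolic S s -> exists t, w_eq t s /\ (size t <= size ws)%N.
Definition min_length_word (lam mu : vec) (v : seq 'I_n) : Prop :=
  actW v lam = mu /\ forall x, actW x lam = mu -> (size v <= size x)%N.

Definition dominant (lam : vec) : Prop := forall i, 0 <= lam 0 i.

Definition is_root (c : vec) : Prop := exists (w : seq 'I_n) (i : 'I_n), c = actR w (ev i).
Definition is_pos_root (c : vec) : Prop := is_root c /\ forall j, 0 <= c 0 j.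
(* g = c^vee = 2 c / (c, c), written in simple-coroot coordinates
   (alpha_j is identified with d j * alpha_j^vee) *)
Definition is_coroot_of (g c : vec) : Prop :=
  forall j, form c c * g 0 j = 2 * c 0 j * d j.

Definition highest_short_root (phi : vec) : Prop :=
  is_root phi /\ (forall c, is_root c -> form phi phi <= form c c) /\
  (forall c, is_root c -> form c c = form phi phi -> forall j, c 0 j <= phi 0 j).

Definition finite_simple_cartan : Prop :=
  (0 < n)%N /\ (forall i, A i i = 2) /\ (forall i j, i != j -> A i j <= 0) /\
  (forall i j, A i j = 0 -> A j i = 0) /\
  (forall i, 0 < d i) /\ (forall i j, d i * A i j = d j * A j i) /\
  (forall x : vec, x != 0 -> 0 < form x x) /\
  (forall S : {set 'I_n}, (forall i j, i \in S -> j \notin S -> A i j = 0) ->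
      S = set0 \/ S = setT).

(* beta_j = s_{i_N} ... s_{i_{j+1}} alpha_{i_j}; betas iw = [:: beta_1; ...; beta_N] *)
Fixpoint betas (iw : seq 'I_n) : seq vec :=
  if iw is i :: w then actR (rev w) (ev i) :: betas w else [::].

(* ---- affine part: beta = (bar beta, deg beta) ---- *)
Definition aff := (vec * int)%type.

Definition aff_root (b : aff) : Prop := exists c, is_root c /\ is_coroot_of b.1 c.
Definition aff_pos (b : aff) : Prop :=
  exists c, is_root c /\ is_coroot_of b.1 c /\
            (0 < b.2 \/ (b.2 = 0 /\ is_pos_root c)).
Definition aff_neg (b : aff) : Prop := aff_pos (- b.1, - b.2).

(* action of v t(nu) in W_ext = t(P) x| W *)
Definition wext_act (v : seq 'I_n) (nu : vec) (b : aff) : aff :=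
  (actC v b.1, b.2 - pairWC nu b.1).

Definition in_Omega (v : seq 'I_n) (nu : vec) : Prop :=
  forall b, aff_pos b -> ~ aff_neg (wext_act v nu b).

(* affine simple reflections, I_aff = option 'I_n with None = 0;
   alpha_0^vee = tilde delta - phi^vee *)
Definition s_aff (phi phic : vec) (i : option 'I_n) (b : aff) : aff :=
  match i with
  | Some i => (sC i b.1, b.2)
  | None => (b.1 - pairRC phi b.1 *: phic, b.2 + pairRC phi b.1)
  end.
Definition simple_aff (phic : vec) (i : option 'I_n) : aff :=
  match i with Some i => (ev i, 0) | None => (- phic, 1) end.
Definition act_aff (phi phic : vec) (l : seq (option 'I_n)) (b : aff) : aff :=
  foldr (s_aff phi phic) b l.

(* tilde beta_j = s_{l_L} ... s_{l_{j+1}} alpha^vee_{l_j} *)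
Fixpoint tbetas (phi phic : vec) (l : seq (option 'I_n)) : seq aff :=
  if l is i :: w then act_aff phi phic (rev w) (simple_aff phic i) :: tbetas phi phic w
  else [::].

Definition tinv (mu : vec) (b : aff) : Prop :=
  aff_pos b /\ aff_neg (wext_act [::] mu b).

Definition aPhi (mu : vec) (b : aff) : rat :=
  ((pairWC mu b.1)%:~R - (b.2)%:~R) / (pairWC mu b.1)%:~R.
(* second component of Phi is beta_j, i.e. beta_j^vee = w0 (bar b) *)
Definition phi_idx (w0 iw : seq 'I_n) (b : aff) (j : nat) : Prop :=
  (1 <= j <= size iw)%N /\ is_coroot_of (actC w0 b.1) (nth 0 (betas iw) j.-1).
(* (a, beta_j) < (a', beta_j')  iff  a < a', or a = a' and beta_j succ beta_j' (j < j') *)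
Definition prec' (mu : vec) (w0 iw : seq 'I_n) (x y : aff) : Prop :=
  exists j j', phi_idx w0 iw x j /\ phi_idx w0 iw y j' /\
    (aPhi mu x < aPhi mu y \/ (aPhi mu x = aPhi mu y /\ (j < j')%N)).

End RootData.

Definition card_is (T : eqType) (P : T -> Prop) (m : nat) : Prop :=
  exists s : seq T, uniq s /\ size s = m /\ forall x, P x <-> x \in s.

From Pilot Require Import Defs.
From HB Require Import structures.
From mathcomp Require Import all_boot all_order all_algebra.
From mathcomp Require Import ring zify.
From Stdlib Require Import Classical.
Set Implicit Arguments. Unset Strict Implicit. Unset Printing Implicit Defensive.
Import Order.TTheory GRing.Theory Num.Theory.

(* An element [beta] of the inversion set of [t(lambda_-)] has first [Phi]-coordinate
   [>= 0], with equality iff [deg beta = <lambda_-, bar beta>]; then [beta] is determined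
   by its second coordinate.  For [j <= M] the root [beta_j] is positive and has a positive
   coefficient on some [alpha_k] with [k] outside [S], so [<lambda, beta_j^vee> > 0] and
   [(w_o beta_j^vee, <lambda, beta_j^vee>)] is an inversion with [Phi = (0, beta_j)].  As
   [prec'] is lexicographic and [beta_1 > beta_2 > ...], the enumeration
   [tilde beta_1 <' tilde beta_2 <' ...] therefore begins with these [M] elements, in
   this order, which gives [w_o (bar tilde beta_k) = beta_k^vee]. *)

Lemma ex_minimizer (T : Type) (P : T -> Prop) (f : T -> nat) :
  (exists x, P x) -> exists2 x, P x & forall y, P y -> (f x <= f y)%N.
Proof.
move=> [x Px]; move: {2}(f x) (erefl (f x)) => m; elim/ltn_ind: m x Px => m IH x Px fx.
case: (classic (exists2 y, P y & (f y < m)%N)) => [[y Py lt]|no].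
  exact: IH lt y Py erefl.
exists x => // y Py; rewrite fx leqNgt; apply/negP => lt; apply: no; by exists y.
Qed.

(** * Lexicographically sorted enumerations *)

(* In the application [xs] enumerates the inversion set in the order [prec'], [f] is the
   first coordinate of [Phi], [J y j] says that the second one is [beta_j], and [b j] is
   the preimage of [(0, beta_j)]. *)
Section LexSortedPrefix.
Variables (T : eqType) (disp : Order.disp_t) (R : porderType disp).
Variables (x0 : T) (xs : seq T) (f : T -> R) (z : R) (J : T -> nat -> Prop).
Variables (b : nat -> T) (M : nat).
Local Notation x i := (nth x0 xs i).

Hypothesis xs_uniq : uniq xs.
Hypothesis xs_lex : forall i, (i.+1 < size xs)%N -> exists j j',
  [/\ J (x i) j, J (x i.+1) j' &
      (f (x i) < f (x i.+1))%O \/ f (x i) = f (x i.+1) /\ (j < j')%N].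
Hypothesis f_ge : forall y, y \in xs -> (z <= f y)%O.
Hypothesis b_bottom : forall j, (1 <= j <= M)%N -> [/\ b j \in xs, f (b j) = z & J (b j) j].
Hypothesis bottom_b : forall y j, y \in xs -> f y = z -> J y j -> y = b j.
Hypothesis J_gt0 : forall y j, J y j -> (0 < j)%N.
Hypothesis J_functional : forall y j j', J y j -> J y j' -> (j <= M)%N -> j = j'.

Lemma lex_b_inj j j' : (1 <= j <= M)%N -> (1 <= j' <= M)%N -> b j = b j' -> j = j'.
Proof.
move=> hj hj' e; have [_ _ Jj] := b_bottom hj; have [_ _ Jj'] := b_bottom hj'.
by rewrite e in Jj; apply: J_functional Jj Jj' _; case/andP: hj.
Qed.

Lemma lex_size : (M <= size xs)%N.
Proof.
rewrite -[M](size_iota 1) -(size_map b); apply: uniq_leq_size.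
  rewrite map_inj_in_uniq ?iota_uniq // => j j'; rewrite !mem_iota => hj hj'.
  by apply: lex_b_inj; lia.
move=> y /mapP [j]; rewrite mem_iota => hj ->.
have hj1 : (1 <= j <= M)%N by lia.
by have [] := b_bottom hj1.
Qed.

Lemma lex_f_mono q p : (q <= p < size xs)%N -> (f (x q) <= f (x p))%O.
Proof.
case/andP=> qp; rewrite -(subnKC qp); elim: (p - q)%N => [|m IH] hm; first by rewrite addn0.
rewrite addnS in hm *; apply: le_trans (IH _) _; first lia.
by have [j [j' [_ _ [/ltW|[-> _]]]]] := xs_lex hm.
Qed.

(* Along a bottom-level stretch of [xs] starting at [k] the [J]-indices increase, so
   they stay above [k.+1] as long as the first [k] terms are [b 1, ..., b k]. *)
Lemma lex_bottom_index_gt k p : (k < p < size xs)%N -> (k < M)%N ->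
  (forall i, (i < k)%N -> x i = b i.+1) -> x p = b k.+1 ->
  forall q, (k <= q <= p)%N -> forall j, J (x q) j -> (k.+1 < j)%N.
Proof.
move=> /andP [kp pL] kM prefix xp.
have xinj i i' : (i < size xs)%N -> (i' < size xs)%N -> x i = x i' -> i = i'.
  by move=> hi hi' /eqP; rewrite nth_uniq // => /eqP.
have hk1 : (1 <= k.+1 <= M)%N by lia.
have [_ fb _] := b_bottom hk1.
have bottom q : (k <= q <= p)%N -> f (x q) = z.
  move=> hq; apply/eqP; rewrite eq_le -{1}fb -xp lex_f_mono; last lia.
  by rewrite f_ge // mem_nth //; lia.
move=> q /andP [kq qp]; move: qp; rewrite -(subnKC kq).
elim: (q - k)%N => [|m IH] hq j; rewrite ?addn0 ?addnS => Jx.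
  have kL : (k < size xs)%N by lia.
  have kk : (k <= k <= p)%N by lia.
  have xb := bottom_b (mem_nth x0 kL) (bottom _ kk) Jx.
  have j1 := J_gt0 Jx; rewrite ltnNge; apply/negP => jk.
  have [jk'|ejk] : (j < k.+1)%N \/ j = k.+1 by lia.
    have jk'' : (j.-1 < k)%N by lia.
    have := prefix _ jk''; rewrite prednK // -xb => /xinj; lia.
  by rewrite ejk -xp in xb; have := xinj _ _ kL pL xb; lia.
have hL : ((k + m).+1 < size xs)%N by lia.
have [j1 [j2 [J1 J2 [lt|[_ j12]]]]] := xs_lex hL.
  by move: lt; rewrite !bottom ?ltxx //; lia.
have kmp : (k + m <= p)%N by lia.
have kj1 := IH kmp _ J1; rewrite ltnNge; apply/negP => jk.
have := J_functional Jx J2; lia.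
Qed.

Lemma lex_prefix k : (k < M)%N -> x k = b k.+1.
Proof.
elim/ltn_ind: k => k IH kM.
have hk1 : (1 <= k.+1 <= M)%N by lia.
have [bin _ Jb] := b_bottom hk1.
set p := index (b k.+1) xs.
have pL : (p < size xs)%N by rewrite index_mem.
have xp : x p = b k.+1 by rewrite nth_index.
case: (ltngtP p k) => [pk|kp|pk]; last by rewrite -{1}pk.
  have hp1 : (1 <= p.+1 <= M)%N by lia.
  have [_ _ Jp] := b_bottom hp1.
  rewrite -(IH p pk) ?xp in Jp; last lia.
  have := J_functional Jp Jb; lia.
have kpL : (k < p < size xs)%N by lia.
have kpp : (k <= p <= p)%N by lia.
have := lex_bottom_index_gt kpL kM (fun i ik => IH i ik (ltn_trans ik kM)) xp kpp.
by rewrite xp => /(_ _ Jb); rewrite ltnn.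
Qed.

Lemma lex_sorted_prefix : (M <= size xs)%N /\ forall k, (k < M)%N -> x k = b k.+1.
Proof. by split; [apply: lex_size | apply: lex_prefix]. Qed.

End LexSortedPrefix.

Lemma card_is_uniq (T : eqType) (P : T -> Prop) (s : seq T) :
  card_is P (size s) -> (forall x, P x <-> x \in s) -> uniq s.
Proof.
move=> [s0 [us [ss hs]]] hP; have e : s0 =i s by move=> y; apply/idP/idP => [/hs/hP|/hP/hs].
by rewrite (uniq_size_uniq us e) ss.
Qed.

Local Open Scope ring_scope.

Section WordAction.
Variables (I : Type) (V : lmodType int) (s : I -> V -> V).
Hypothesis s_linear : forall i a (x y : V), s i (a *: x + y) = a *: s i x + s i y.
Local Notation act w x := (foldr s x w).

Lemma word_act_linear w a (x y : V) : act w (a *: x + y) = a *: act w x + act w y.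
Proof. by elim: w => //= i w ->; rewrite s_linear. Qed.

Lemma word_act0 w : act w 0 = 0.
Proof.
have := word_act_linear w 1 0 0; rewrite !addr0 !scale1r => h.
by apply: (@addrI _ (act w 0)); rewrite addr0 -h.
Qed.

Lemma word_actD w (x y : V) : act w (x + y) = act w x + act w y.
Proof. by have := word_act_linear w 1 x y; rewrite !scale1r. Qed.

Lemma word_actZ w a (x : V) : act w (a *: x) = a *: act w x.
Proof. by have := word_act_linear w a x 0; rewrite !addr0 word_act0 addr0. Qed.

Lemma word_actN w (x : V) : act w (- x) = - act w x.
Proof. by rewrite -scaleN1r word_actZ scaleN1r. Qed.

Lemma word_act_sum w (J : finType) (F : J -> V) : act w (\sum_j F j) = \sum_j act w (F j).
Proof. exact: (big_morph _ (word_actD w) (word_act0 w)). Qed.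

Hypothesis s_invol : forall i, involutive (s i).

Lemma word_act_revK w : cancel (fun x => act w x) (fun x => act (rev w) x).
Proof.
elim: w => //= i w IH x; rewrite rev_cons -cats1 foldr_cat /= s_invol; exact: IH.
Qed.

Lemma word_act_Krev w : cancel (fun x => act (rev w) x) (fun x => act w x).
Proof. by have := word_act_revK (rev w); rewrite revK. Qed.

End WordAction.

Section CartanMatrix.
Variables (n : nat) (A : 'M[int]_n) (d : 'I_n -> int).
Hypothesis A_diag : forall i, A i i = 2.
Hypothesis dA_sym : forall i j, d i * A i j = d j * A j i.
Hypothesis d_gt0 : forall i, 0 < d i.

Local Notation vec := 'rV[int]_n.
Local Notation sR := (sR A).
Local Notation sC := (sC A).
Local Notation sW := (sW A).
Local Notation actR := (actR A).
Local Notation actC := (actC A).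
Local Notation actW := (actW A).
Local Notation form := (Defs.form A d).
Local Notation coroot := (is_coroot_of A d).

Lemma evE i j : (ev i : vec) 0 j = ((i == j) : nat)%:R.
Proof. by rewrite mxE. Qed.

Lemma sum_ev (f : 'I_n -> int) i : \sum_j f j * ((i == j) : nat)%:R = f i.
Proof.
rewrite (bigD1 i) //= big1 => [|j /negPf ji]; last by rewrite eq_sym ji mulr0.
by rewrite eqxx mulr1 addr0.
Qed.

Lemma vec_decomp (c : vec) : c = \sum_j c 0 j *: ev j.
Proof.
by apply/rowP => k; rewrite summxE; under eq_bigr do rewrite !mxE eq_sym; rewrite sum_ev.
Qed.

Lemma pairRC_evr (c : vec) i : pairRC A c (ev i) = \sum_j A i j * c 0 j.
Proof.
rewrite /pairRC (bigD1 i) //= [X in _ + X]big1 => [|k /negPf ki]; last first.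
  by apply: big1 => j _; rewrite evE eq_sym ki !mul0r.
by rewrite addr0; apply: eq_bigr => j _; rewrite evE eqxx mul1r.
Qed.

Lemma pairRC_evl (g : vec) i : pairRC A (ev i) g = \sum_k g 0 k * A k i.
Proof.
apply: eq_bigr => k _; rewrite (bigD1 i) //= big1 => [|j /negPf ji].
  by rewrite addr0 evE eqxx mulr1.
by rewrite evE eq_sym ji mulr0.
Qed.

Lemma pairRC_evev i : pairRC A (ev i) (ev i) = 2.
Proof. by rewrite pairRC_evr; under eq_bigr do rewrite evE; rewrite sum_ev A_diag. Qed.

Lemma pairRC_linl a (c1 c2 g : vec) :
  pairRC A (a *: c1 + c2) g = a * pairRC A c1 g + pairRC A c2 g.
Proof.
rewrite /pairRC mulr_sumr -big_split; apply: eq_bigr => i _.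
by rewrite mulr_sumr -big_split; apply: eq_bigr => j _; rewrite !mxE /=; ring.
Qed.

Lemma pairRC_linr a (c g1 g2 : vec) :
  pairRC A c (a *: g1 + g2) = a * pairRC A c g1 + pairRC A c g2.
Proof.
rewrite /pairRC mulr_sumr -big_split; apply: eq_bigr => i _.
by rewrite mulr_sumr -big_split; apply: eq_bigr => j _; rewrite !mxE /=; ring.
Qed.

Lemma sR_linear i a (c1 c2 : vec) : sR i (a *: c1 + c2) = a *: sR i c1 + sR i c2.
Proof. by apply/rowP => k; rewrite /Defs.sR !mxE pairRC_linl; ring. Qed.

Lemma sC_linear i a (c1 c2 : vec) : sC i (a *: c1 + c2) = a *: sC i c1 + sC i c2.
Proof. by apply/rowP => k; rewrite /Defs.sC !mxE pairRC_linr; ring. Qed.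

Lemma sW_linear i a (c1 c2 : vec) : sW i (a *: c1 + c2) = a *: sW i c1 + sW i c2.
Proof. by apply/rowP => k; rewrite /Defs.sW !mxE; ring. Qed.

Lemma sR_ev i : sR i (ev i) = - ev i.
Proof. by apply/rowP => k; rewrite /Defs.sR pairRC_evev !mxE; ring. Qed.

Lemma sRK i : involutive (sR i).
Proof.
move=> c; rewrite /Defs.sR; set P := pairRC A c (ev i).
have -> : c - P *: ev i = (- P) *: ev i + c by rewrite scaleNr addrC.
by rewrite pairRC_linl pairRC_evev; apply/rowP => k; rewrite !mxE; ring.
Qed.

Lemma sCK i : involutive (sC i).
Proof.
move=> g; rewrite /Defs.sC; set P := pairRC A (ev i) g.
have -> : g - P *: ev i = (- P) *: ev i + g by rewrite scaleNr addrC.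
by rewrite pairRC_linr pairRC_evev; apply/rowP => k; rewrite !mxE; ring.
Qed.

Lemma sWK i : involutive (sW i).
Proof. by move=> lam; apply/rowP => k; rewrite /Defs.sW !mxE A_diag; ring. Qed.

Lemma actR_cat s t c : actR (s ++ t) c = actR s (actR t c).
Proof. exact: foldr_cat. Qed.
Lemma actC_cat s t g : actC (s ++ t) g = actC s (actC t g).
Proof. exact: foldr_cat. Qed.
Lemma actW_cat s t lam : actW (s ++ t) lam = actW s (actW t lam).
Proof. exact: foldr_cat. Qed.

Lemma actR_linear w a (c1 c2 : vec) : actR w (a *: c1 + c2) = a *: actR w c1 + actR w c2.
Proof. exact: word_act_linear sR_linear w a c1 c2. Qed.
Lemma actR0 w : actR w 0 = 0.
Proof. exact: word_act0 sR_linear w. Qed.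
Lemma actRZ w a (c : vec) : actR w (a *: c) = a *: actR w c.
Proof. exact: word_actZ sR_linear w a c. Qed.
Lemma actRN w (c : vec) : actR w (- c) = - actR w c.
Proof. exact: word_actN sR_linear w c. Qed.
Lemma actR_sum w (F : 'I_n -> vec) : actR w (\sum_j F j) = \sum_j actR w (F j).
Proof. exact: (word_act_sum sR_linear). Qed.
Lemma actW_sum w (F : 'I_n -> vec) : actW w (\sum_j F j) = \sum_j actW w (F j).
Proof. exact: (word_act_sum sW_linear). Qed.
Lemma actWZ w a (lam : vec) : actW w (a *: lam) = a *: actW w lam.
Proof. exact: word_actZ sW_linear w a lam. Qed.

Lemma actR_revK w : cancel (actR w) (actR (rev w)).
Proof. exact: word_act_revK sRK w. Qed.
Lemma actR_Krev w : cancel (actR (rev w)) (actR w).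
Proof. exact: word_act_Krev sRK w. Qed.
Lemma actC_revK w : cancel (actC w) (actC (rev w)).
Proof. exact: word_act_revK sCK w. Qed.
Lemma actC_Krev w : cancel (actC (rev w)) (actC w).
Proof. exact: word_act_Krev sCK w. Qed.
Lemma actW_revK w : cancel (actW w) (actW (rev w)).
Proof. exact: word_act_revK sWK w. Qed.
Lemma actW_Krev w : cancel (actW (rev w)) (actW w).
Proof. exact: word_act_Krev sWK w. Qed.

Lemma actR_decomp w (c : vec) : actR w c = \sum_j c 0 j *: actR w (ev j).
Proof. by rewrite {1}(vec_decomp c) actR_sum; under eq_bigr do rewrite actRZ. Qed.

Lemma actR_notin (t : seq 'I_n) (c : vec) k : k \notin t -> (actR t c) 0 k = c 0 k.
Proof.
elim: t => //= x t IH; rewrite inE negb_or => /andP [kx kt].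
by rewrite /Defs.sR !mxE IH // eq_sym (negPf kx) mulr0 subr0.
Qed.

Lemma actR_ev_neq0 w i : actR w (ev i) != 0.
Proof.
apply/eqP => h; have := actR_revK w (ev i); rewrite h actR0 => /rowP /(_ i).
by rewrite !mxE eqxx.
Qed.

Lemma pairWC_evl k (g : vec) : pairWC (ev k) g = g 0 k.
Proof. by rewrite /pairWC; under eq_bigr do rewrite evE mulrC; rewrite sum_ev. Qed.

Lemma pairWC_sW i (lam g : vec) : pairWC (sW i lam) g = pairWC lam (sC i g).
Proof.
rewrite /pairWC /Defs.sW /Defs.sC pairRC_evl.
under eq_bigr do rewrite !mxE.
under [RHS]eq_bigr do rewrite !mxE.
rewrite (eq_bigr (fun k => lam 0 k * g 0 k - lam 0 i * (A k i * g 0 k))); last by move=> k _; ring.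
set Q := \sum_k g 0 k * A k i.
rewrite [RHS](eq_bigr (fun k => lam 0 k * g 0 k - Q * (lam 0 k * ((i == k) : nat)%:R)));
  last by move=> k _; ring.
rewrite !sumrB -!mulr_sumr sum_ev /Q mulrC; congr (_ - _ * _).
by apply: eq_bigr => k _; ring.
Qed.

Lemma pairWC_actW w (lam g : vec) : pairWC (actW w lam) g = pairWC lam (actC (rev w) g).
Proof.
elim: w lam g => //= i w IH lam g.
by rewrite pairWC_sW rev_cons -cats1 actC_cat /= IH.
Qed.

Lemma form_linl a (x y z : vec) : form (a *: x + y) z = a * form x z + form y z.
Proof.
rewrite /Defs.form mulr_sumr -big_split; apply: eq_bigr => i _.
by rewrite mulr_sumr -big_split; apply: eq_bigr => j _; rewrite !mxE /=; ring.
Qed.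

Lemma form_linr a (x y z : vec) : form z (a *: x + y) = a * form z x + form z y.
Proof.
rewrite /Defs.form mulr_sumr -big_split; apply: eq_bigr => i _.
by rewrite mulr_sumr -big_split; apply: eq_bigr => j _; rewrite !mxE /=; ring.
Qed.

Lemma formZl a (x z : vec) : form (a *: x) z = a * form x z.
Proof.
rewrite /Defs.form mulr_sumr; apply: eq_bigr => i _.
by rewrite mulr_sumr; apply: eq_bigr => j _; rewrite mxE; ring.
Qed.

Lemma formZr a (x z : vec) : form z (a *: x) = a * form z x.
Proof.
rewrite /Defs.form mulr_sumr; apply: eq_bigr => i _.
by rewrite mulr_sumr; apply: eq_bigr => j _; rewrite mxE; ring.
Qed.

Lemma formN (c : vec) : form (- c) (- c) = form c c.
Proof. by rewrite -scaleN1r formZl formZr mulrA mulrNN mul1r. Qed.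

Lemma formC (x y : vec) : form x y = form y x.
Proof.
rewrite /Defs.form exchange_big; apply: eq_bigr => i _; apply: eq_bigr => j _.
transitivity (x 0 j * (d j * A j i) * y 0 i); first ring.
by rewrite dA_sym; ring.
Qed.

Lemma form_evl i (c : vec) : form (ev i) c = d i * pairRC A c (ev i).
Proof.
rewrite pairRC_evr /Defs.form (bigD1 i) //= [X in _ + X]big1 => [|k /negPf ki]; last first.
  by apply: big1 => j _; rewrite evE eq_sym ki !mul0r.
by rewrite addr0 mulr_sumr; apply: eq_bigr => j _; rewrite evE eqxx mul1r; ring.
Qed.

Lemma form_evev i : form (ev i) (ev i) = 2 * d i.
Proof. by rewrite form_evl pairRC_evev mulrC. Qed.

Lemma form_sR i (c : vec) : form (sR i c) (sR i c) = form c c.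
Proof.
have -> : sR i c = (- pairRC A c (ev i)) *: ev i + c by rewrite /Defs.sR scaleNr addrC.
by rewrite form_linl !form_linr form_evev [form c (ev i)]formC form_evl; ring.
Qed.

Lemma form_actR w (c : vec) : form (actR w c) (actR w c) = form c c.
Proof. by elim: w => //= i w IH; rewrite form_sR. Qed.

Lemma coroot_ev i : coroot (ev i) (ev i).
Proof. by move=> j; rewrite form_evev !evE; case: (eqVneq i j) => [->|_] /=; ring. Qed.

Lemma coroot_sR i (g c : vec) : coroot g c -> coroot (sC i g) (sR i c).
Proof.
move=> H j; rewrite form_sR /Defs.sR /Defs.sC !mxE.
set P := pairRC A c (ev i); set Q := pairRC A (ev i) g.
have HQ : form c c * Q = 2 * d i * P.
  rewrite /Q /P pairRC_evl pairRC_evr mulr_sumr mulr_sumr; apply: eq_bigr => k _.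
  transitivity (form c c * g 0 k * A k i); first ring.
  rewrite H; transitivity (2 * c 0 k * (d k * A k i)); first ring.
  by rewrite dA_sym; ring.
case: (eqVneq i j) => [<-|_] /=; first by rewrite mulrBr H mulr1 HQ; ring.
by transitivity (form c c * g 0 j); [ring | rewrite H; ring].
Qed.

Lemma coroot_act w (g c : vec) : coroot g c -> coroot (actC w g) (actR w c).
Proof. by elim: w => //= i w IH /IH; apply: coroot_sR. Qed.

Lemma corootN (g c : vec) : coroot g c -> coroot (- g) (- c).
Proof. by move=> H j; rewrite formN !mxE mulrN H; ring. Qed.

Lemma coroot_uniq (g g' c : vec) : form c c != 0 -> coroot g c -> coroot g' c -> g = g'.
Proof. by move=> F0 H H'; apply/rowP => j; apply: (mulfI F0); rewrite H H'. Qed.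

Lemma coroot_inj (g c c' : vec) : 0 < form c c -> 0 < form c' c' ->
  coroot g c -> coroot g c' -> c = c'.
Proof.
set F := form c c; set F' := form c' c' => F0 F0' H H'.
have E : F *: c' = F' *: c.
  apply/rowP => j; rewrite !mxE.
  have dj : 2 * d j != 0 by rewrite mulf_neq0 // gt_eqF.
  apply: (mulIf dj); transitivity (F * (F' * g 0 j)); first by rewrite H'; ring.
  by rewrite mulrCA H; ring.
have FF : F = F'.
  have := congr1 (fun x => form x x) E; rewrite /= !formZl !formZr -/F -/F' => e.
  have : F * F' * (F - F') = 0.
    by transitivity (F * (F * F') - F' * (F' * F)); [ring | rewrite e subrr].
  by move/eqP; rewrite !mulf_eq0 subr_eq0 (gt_eqF F0) (gt_eqF F0') => /eqP.
apply/rowP => j; have := congr1 (fun x : vec => x 0 j) E.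
by rewrite /= !mxE -FF => /(mulfI (negbT (gt_eqF F0))).
Qed.

Lemma root_form_gt0 (c : vec) : is_root A c -> 0 < form c c.
Proof. by move=> [w [i ->]]; rewrite form_actR form_evev mulr_gt0. Qed.

Lemma root_neq0 (c : vec) : is_root A c -> c != 0.
Proof. by move=> [w [i ->]]; apply: actR_ev_neq0. Qed.

Lemma rootN (c : vec) : is_root A c -> is_root A (- c).
Proof. by move=> [w [i ->]]; exists (rcons w i), i; rewrite -cats1 actR_cat /= sR_ev actRN. Qed.

Lemma root_act w (c : vec) : is_root A c -> is_root A (actR w c).
Proof. by move=> [w' [i ->]]; exists (w ++ w'), i; rewrite actR_cat. Qed.

(** * Length in the Weyl group *)

Local Notation w_eq := (w_eq A).

Lemma weq_sym s t : w_eq s t -> w_eq t s.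
Proof. by move=> h lam; rewrite h. Qed.
Lemma weq_trans s t u : w_eq s t -> w_eq t u -> w_eq s u.
Proof. by move=> h1 h2 lam; rewrite h1 h2. Qed.
Lemma weq_catl a s t : w_eq s t -> w_eq (a ++ s) (a ++ t).
Proof. by move=> h lam; rewrite !actW_cat h. Qed.
Lemma weq_catr b s t : w_eq s t -> w_eq (s ++ b) (t ++ b).
Proof. by move=> h lam; rewrite !actW_cat h. Qed.
Lemma weq_rcons i s t : w_eq s t -> w_eq (rcons s i) (rcons t i).
Proof. by rewrite -!cats1; apply: weq_catr. Qed.
Lemma weq_rev s t : w_eq s t -> w_eq (rev s) (rev t).
Proof. by move=> h lam; rewrite -{1}[lam](actW_Krev t) -h actW_revK. Qed.
Lemma weq_cancel s i t : w_eq (s ++ [:: i; i] ++ t) (s ++ t).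
Proof. by move=> lam; rewrite !actW_cat /= sWK. Qed.
Lemma weq_rcons2 w i : w_eq (rcons (rcons w i) i) w.
Proof. by move=> lam; rewrite -!cats1 -catA actW_cat /= sWK. Qed.

Lemma weq_actC s t g : w_eq s t -> actC s g = actC t g.
Proof.
move=> h; apply/rowP => k; rewrite -!pairWC_evl.
by rewrite -[s]revK -[t]revK -!pairWC_actW; congr pairWC; apply: weq_rev.
Qed.

(* [A] maps the root lattice to the weight lattice, intertwining the two actions; it is
   injective because the invariant form is positive definite. *)
Definition root_to_weight (c : vec) : vec := \row_k \sum_j A k j * c 0 j.

Lemma root_to_weight_sR i c : root_to_weight (sR i c) = sW i (root_to_weight c).
Proof.
apply/rowP => k; rewrite /root_to_weight /Defs.sW /Defs.sR !mxE pairRC_evr.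
under eq_bigr do rewrite !mxE.
rewrite (eq_bigr (fun j => A k j * c 0 j -
            (\sum_j0 A i j0 * c 0 j0) * (A k j * ((i == j) : nat)%:R))); last by move=> j _; ring.
by rewrite sumrB -mulr_sumr sum_ev.
Qed.

Lemma root_to_weight_act w c : root_to_weight (actR w c) = actW w (root_to_weight c).
Proof. by elim: w => //= i w IH; rewrite root_to_weight_sR IH. Qed.

Hypothesis form_pos_def : forall x : vec, x != 0 -> 0 < form x x.

Lemma root_to_weight_inj : injective root_to_weight.
Proof.
move=> c c' h; apply/eqP; rewrite -subr_eq0; apply/negPn/negP => /form_pos_def.
have : root_to_weight (c - c') = 0.
  apply/rowP => k; move/rowP/(_ k): h; rewrite !mxE => h.
  rewrite (eq_bigr (fun j => A k j * c 0 j - A k j * c' 0 j));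
    last by move=> j _; rewrite !mxE; ring.
  by rewrite sumrB h subrr.
move: (c - c') => x ex.
have -> : form x x = \sum_i x 0 i * d i * root_to_weight x 0 i.
  rewrite /Defs.form; apply: eq_bigr => i _; rewrite [root_to_weight x 0 i]mxE mulr_sumr.
  by apply: eq_bigr => j _; ring.
by rewrite ex big1 ?ltxx // => i _; rewrite mxE mulr0.
Qed.

Lemma weq_actR s t c : w_eq s t -> actR s c = actR t c.
Proof. by move=> h; apply: root_to_weight_inj; rewrite !root_to_weight_act h. Qed.

Definition w_eqb (s t : seq 'I_n) : bool := [forall i, actW s (ev i) == actW t (ev i)].

Lemma w_eqP s t : reflect (w_eq s t) (w_eqb s t).
Proof.
apply: (iffP forallP) => [h lam|h i]; last by rewrite h.
rewrite (vec_decomp lam) !actW_sum; apply: eq_bigr => j _.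
by rewrite !actWZ (eqP (h j)).
Qed.

Lemma len_in_exists (P : pred 'I_n) w :
  exists k, [exists t : k.-tuple 'I_n, all P t && w_eqb t w] || (k == size w).
Proof. by exists (size w); rewrite eqxx orbT. Qed.

(* Length of [w] in the generators [P]; the disjunct [k == size w] above only matters
   when [w] has letters outside [P]. *)
Definition len_in (P : pred 'I_n) w : nat := ex_minn (len_in_exists P w).

Lemma len_in_le P t w : all P t -> w_eq t w -> (len_in P w <= size t)%N.
Proof.
move=> Pt h; rewrite /len_in; case: ex_minnP => m _; apply.
by apply/orP; left; apply/existsP; exists (in_tuple t); rewrite Pt; apply/w_eqP.
Qed.

Lemma len_in_size P w : (len_in P w <= size w)%N.
Proof. by rewrite /len_in; case: ex_minnP => m _; apply; rewrite eqxx orbT. Qed.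

Lemma len_in_word P w : all P w -> exists2 t, all P t & size t = len_in P w /\ w_eq t w.
Proof.
move=> Pw; rewrite /len_in; case: ex_minnP => m /orP [/existsP [t /andP [Pt /w_eqP h]]|/eqP ->] _.
  by exists t; rewrite ?size_tuple.
by exists w.
Qed.

Lemma len_in_cons (P : pred 'I_n) i u : P i -> all P u -> (len_in P (i :: u) <= (len_in P u).+1)%N.
Proof.
move=> Pi Pu; have [t Pt [<- ht]] := len_in_word Pu.
by apply: (@len_in_le P (i :: t)); [rewrite /= Pi Pt | move=> lam; rewrite /= ht].
Qed.

Lemma len_in_weq P w w' : all P w -> all P w' -> w_eq w w' -> len_in P w = len_in P w'.
Proof.
move=> Pw Pw' h; apply/eqP; rewrite eqn_leq; apply/andP; split.
  by have [t Pt [<- ht]] := len_in_word Pw'; apply: len_in_le Pt _; apply: weq_trans ht (weq_sym h).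
by have [t Pt [<- ht]] := len_in_word Pw; apply: len_in_le Pt _; apply: weq_trans ht h.
Qed.

Definition len w := len_in predT w.

Lemma all_predT (w : seq 'I_n) : all predT w.
Proof. exact/allP. Qed.

Lemma len_le t w : w_eq t w -> (len w <= size t)%N.
Proof. exact: len_in_le (all_predT t). Qed.

Lemma len_size w : (len w <= size w)%N.
Proof. exact: len_in_size. Qed.

Lemma len_word w : exists2 t, size t = len w & w_eq t w.
Proof. by have [t _ [st ht]] := len_in_word (all_predT w); exists t. Qed.

Lemma len_weq w w' : w_eq w w' -> len w = len w'.
Proof.
move=> h; apply/eqP; rewrite eqn_leq; apply/andP; split.
  by have [t <- ht] := len_word w'; apply/len_le/(weq_trans ht)/weq_sym.
by have [t <- ht] := len_word w; apply/len_le/(weq_trans ht).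
Qed.

Lemma len_cat s t w : w_eq (s ++ t) w -> (len w <= len s + len t)%N.
Proof.
move=> h; have [s' <- es] := len_word s; have [t' <- et] := len_word t.
rewrite -size_cat; apply: len_le; apply: weq_trans h.
by apply: weq_trans (weq_catl _ et); apply: weq_catr.
Qed.

Lemma len_le_in P w : all P w -> (len w <= len_in P w)%N.
Proof. by move=> Pw; have [t _ [<- h]] := len_in_word Pw; apply: len_le. Qed.

Lemma len_rev w : len (rev w) = len w.
Proof.
suff H u : (len (rev u) <= len u)%N by apply/eqP; rewrite eqn_leq H -{1}[w]revK H.
by have [t <- h] := len_word u; rewrite -size_rev; apply: len_le; apply: weq_rev.
Qed.

Lemma reducedP s : reduced_word A s <-> len s = size s.
Proof.
split=> [h|h t ht]; last by rewrite -h; apply: len_le.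
by apply/eqP; rewrite eqn_leq len_size /=; have [t <- ht] := len_word s; apply: h.
Qed.

Lemma reduced_infix a b c : len (a ++ b ++ c) = size (a ++ b ++ c) -> len b = size b.
Proof.
move=> h; apply/eqP; rewrite eqn_leq len_size /= leqNgt; apply/negP => lt.
have [t st ht] := len_word b.
have : (len (a ++ b ++ c) <= size (a ++ t ++ c))%N by apply/len_le/weq_catl/weq_catr.
by rewrite h !size_cat st; lia.
Qed.

(** * Rank two *)

Definition comb2 (s s' : 'I_n) (x y : int) : vec := x *: ev s + y *: ev s'.

Lemma comb2C s s' x y : comb2 s s' x y = comb2 s' s y x.
Proof. by rewrite /comb2 addrC. Qed.

Lemma comb2_ev s s' : comb2 s s' 1 0 = ev s.
Proof. by rewrite /comb2 scale1r scale0r addr0. Qed.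

Lemma pairRC_comb2 s s' x y i : pairRC A (comb2 s s' x y) (ev i) = A i s * x + A i s' * y.
Proof.
rewrite pairRC_evr; under eq_bigr do rewrite !mxE.
rewrite (eq_bigr (fun j => (A i j * x) * ((s == j) : nat)%:R + (A i j * y) * ((s' == j) : nat)%:R));
  last by move=> j _; ring.
by rewrite big_split /= !sum_ev.
Qed.

Lemma sR_comb2 s s' x y : s != s' -> sR s' (comb2 s s' x y) = comb2 s s' x (- y - A s' s * x).
Proof.
move=> ss; have -> : sR s' (comb2 s s' x y) =
  - pairRC A (comb2 s s' x y) (ev s') *: ev s' + comb2 s s' x y by rewrite /Defs.sR scaleNr addrC.
by rewrite pairRC_comb2 A_diag; apply/rowP => k; rewrite !mxE /=; ring.
Qed.

Lemma form_comb2 s s' p q : form (comb2 s s' p q) (comb2 s s' p q) =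
  p * (d s * (A s s * p + A s s' * q)) + q * (d s' * (A s' s * p + A s' s' * q)).
Proof. by rewrite {1}/comb2 form_linl formZl !form_evl !pairRC_comb2. Qed.

Hypothesis A_offdiag : forall i j, i != j -> A i j <= 0.
Hypothesis A_zero_sym : forall i j, A i j = 0 -> A j i = 0.

(* The rank-two Cartan matrices: positive definiteness of the form on
   [- A s s' alpha_s + 2 alpha_s'] forces [A s s' * A s' s < 4]. *)
Lemma cartan_pair_cases s s' : s != s' ->
  (A s s' = 0 /\ A s' s = 0) \/ (A s s' = -1 /\ A s' s = -1) \/
  (A s s' = -1 /\ A s' s = -2) \/ (A s s' = -2 /\ A s' s = -1) \/
  (A s s' = -1 /\ A s' s = -3) \/ (A s s' = -3 /\ A s' s = -1).
Proof.
move=> ss; have ha := A_offdiag ss; have hb : A s' s <= 0 by rewrite A_offdiag // eq_sym.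
have z1 := @A_zero_sym s s'; have z2 := @A_zero_sym s' s.
have hx : comb2 s s' (- A s s') 2 != 0.
  by apply/negP => /eqP /rowP /(_ s'); rewrite !mxE eqxx (negPf ss) mulr0 add0r mulr1.
have := form_pos_def hx; rewrite form_comb2 !A_diag.
have -> : - A s s' * (d s * (2 * - A s s' + A s s' * 2)) +
          2 * (d s' * (A s' s * - A s s' + 2 * 2)) = 2 * d s' * (4 - A s s' * A s' s) by ring.
rewrite pmulr_rgt0 ?mulr_gt0 // subr_gt0.
move: ha hb z1 z2; set a := A s s'; set b := A s' s => ha hb z1 z2 hab.
have [a0|a0] := eqVneq a 0; first by left; split => //; apply: z1.
have [b0|b0] := eqVneq b 0; first by move/eqP: a0; case; apply: z2.
by right; lia.
Qed.

Fixpoint alt_word (x y : 'I_n) (k : nat) : seq 'I_n :=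
  if k is k'.+1 then rcons (alt_word y x k') y else [::].

Lemma size_alt_word x y k : size (alt_word x y k) = k.
Proof. by elim: k x y => //= k IH x y; rewrite size_rcons IH. Qed.

Definition pair_pred (s s' : 'I_n) : pred 'I_n := fun x => (x == s) || (x == s').

Lemma pair_predC s s' : pair_pred s s' =1 pair_pred s' s.
Proof. by move=> x; rewrite /pair_pred orbC. Qed.

Lemma all_alt_word x y k : all (pair_pred x y) (alt_word x y k).
Proof.
elim: k x y => //= k IH x y; rewrite all_rcons /pair_pred eqxx orbT /=.
by apply: sub_all (IH y x) => z; rewrite pair_predC.
Qed.

Lemma alt_wordP x y t : x != y -> all (pair_pred x y) t ->
  (forall p q z, t <> p ++ z :: z :: q) -> last y t = y -> t = alt_word x y (size t).
Proof.
elim/last_ind: t x y => [//|t z IH] x y xy Pt nadj.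
rewrite last_rcons => zy; subst z; rewrite size_rcons /=; congr rcons.
have Pt' : all (pair_pred y x) t.
  by move: Pt; rewrite all_rcons => /andP [_]; apply: sub_all => w; rewrite pair_predC.
have nadj' p q z : t <> p ++ z :: z :: q.
  by move=> et; apply: (nadj p (rcons q y) z); rewrite et rcons_cat.
apply: IH => //; first by rewrite eq_sym.
move: Pt' nadj; case/lastP: t {Pt nadj'} => // t z.
rewrite all_rcons last_rcons => /andP [/orP [/eqP zy|/eqP //] _] nadj.
by case: (nadj t [::] y); rewrite zy -!cats1 -catA.
Qed.

(* Coefficients of [alt_word s s' k] applied to [x alpha_s + y alpha_s'], for
   [a = A s s'] and [b = A s' s]. *)
Fixpoint alt_coef (a b : int) (k : nat) (x y : int) : int * int :=
  if k is k'.+1 then let p := alt_coef b a k' (- y - b * x) x in (p.2, p.1) else (x, y).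

Lemma alt_coefP k s s' x y : s != s' ->
  actR (alt_word s s' k) (comb2 s s' x y) =
  comb2 s s' (alt_coef (A s s') (A s' s) k x y).1 (alt_coef (A s s') (A s' s) k x y).2.
Proof.
elim: k s s' x y => //= k IH s s' x y ss.
by rewrite -cats1 actR_cat /= sR_comb2 // comb2C IH 1?eq_sym // comb2C.
Qed.

(* Same for weights: [lam + X alpha_s + Y alpha_s'] is sent to
   [lam + X' alpha_s + Y' alpha_s'], where [(u, v, X', Y')] is computed from the
   coordinates [u, v] of the weight at [s, s']. *)
Fixpoint alt_wcoef (a b : int) (k : nat) (u v X Y : int) : int * int * int * int :=
  if k is k'.+1 then
    let '(v1, u1, Y1, X1) := alt_wcoef b a k' (- v) (u - v * a) (Y - v) X in (u1, v1, X1, Y1)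
  else (u, v, X, Y).

Lemma alt_wcoefP k s s' (mu : vec) X Y : s != s' ->
  let lam := mu + X *: alphaW A s + Y *: alphaW A s' in
  let r := alt_wcoef (A s s') (A s' s) k (lam 0 s) (lam 0 s') X Y in
  actW (alt_word s s' k) lam = mu + r.1.2 *: alphaW A s + r.2 *: alphaW A s'.
Proof.
elim: k s s' mu X Y => [|k IH] s s' mu X Y ss lam r //=.
rewrite -cats1 actW_cat /=.
set lam' := mu + (Y - lam 0 s') *: alphaW A s' + X *: alphaW A s.
have e1 : sW s' lam = lam'.
  by apply/rowP => j; rewrite /Defs.sW /lam' /lam !mxE; ring.
have e2 : lam' 0 s' = - lam 0 s'.
  by rewrite -e1 /Defs.sW !mxE A_diag; ring.
have e3 : lam' 0 s = lam 0 s - lam 0 s' * A s s'.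
  by rewrite -e1 /Defs.sW !mxE.
have := IH s' s mu (Y - lam 0 s') X; rewrite eq_sym => /(_ ss); cbv zeta.
rewrite -/lam' e1 e2 e3 => ->; rewrite /r /=.
by case: (alt_wcoef _ _ _ _ _ _ _) => [[[v1 u1] Y1] X1] /=; rewrite addrAC.
Qed.

(* The order of [s s'] in W. *)
Definition braid_length (a b : int) : nat :=
  if a * b == 0 then 2 else if a * b == 1 then 3 else if a * b == 2 then 4 else 6.

Lemma braid_relation s s' : s != s' ->
  let m := braid_length (A s s') (A s' s) in w_eq (alt_word s s' m) (alt_word s' s m).
Proof.
move=> ss m lam; have ss' : s' != s by rewrite eq_sym.
have := alt_wcoefP m lam 0 0 ss; have := alt_wcoefP m lam 0 0 ss'.
rewrite !scale0r !addr0 => -> ->; rewrite [in RHS]addrAC /m.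
have [[-> ->]|[[-> ->]|[[-> ->]|[[-> ->]|[[-> ->]|[-> ->]]]]]] := cartan_pair_cases ss;
  by rewrite /braid_length /=; congr (_ + _ *: _ + _ *: _); ring.
Qed.

Lemma alt_coef_ge0 s s' k : s != s' -> (k < braid_length (A s s') (A s' s))%N ->
  0 <= (alt_coef (A s s') (A s' s) k 1 0).1 /\ 0 <= (alt_coef (A s s') (A s' s) k 1 0).2.
Proof.
move=> ss.
have [[-> ->]|[[-> ->]|[[-> ->]|[[-> ->]|[[-> ->]|[-> ->]]]]]] := cartan_pair_cases ss;
  by rewrite /braid_length /=; case: k => [|[|[|[|[|[|k]]]]]].
Qed.

Lemma len_in_word_min (P : pred 'I_n) w : all P w ->
  exists2 t, [/\ all P t, size t = len_in P w & w_eq t w] &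
             forall p q z, t <> p ++ z :: z :: q.
Proof.
move=> Pw; have [t Pt [st ht]] := len_in_word Pw; exists t => // p q z et.
have : (len_in P w <= size (p ++ q))%N.
  apply: len_in_le; first by move: Pt; rewrite et !all_cat /= => /and3P [-> _ /andP [_ ->]].
  by apply: weq_trans (weq_sym (weq_cancel p z q)) _; rewrite /= -et.
by rewrite -st et !size_cat /=; lia.
Qed.

Lemma alt_word_lt_braid s s' t : s != s' -> all (pair_pred s s') t ->
  (forall p q z, t <> p ++ z :: z :: q) -> last s' t = s' ->
  (size t <= len_in (pair_pred s s') (rcons t s))%N ->
  (size t < braid_length (A s s') (A s' s))%N.
Proof.
move=> ss Pt nadj lt hl; rewrite ltnNge; apply/negP => mk.
set m := braid_length (A s s') (A s' s) in mk.
set k := size t in hl mk.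
have m0 : (0 < m)%N by rewrite /m /braid_length; repeat case: ifP.
have Et : t = take (k - m) t ++ drop (k - m) t by rewrite cat_take_drop.
have sD : size (drop (k - m) t) = m by rewrite size_drop /k; lia.
have := Pt; rewrite Et all_cat => /andP [Ptake PD].
have nD p q z : drop (k - m) t <> p ++ z :: z :: q.
  by move=> e; apply: (nadj (take (k - m) t ++ p) q z); rewrite -catA -e -Et.
have lD : last s' (drop (k - m) t) = s'.
  move: lt; rewrite {1}Et last_cat.
  by case E: (drop (k - m) t) => [|d0 ds] //; move: sD; rewrite E /=; lia.
have DE := alt_wordP ss PD nD lD; rewrite sD in DE.
have [m' em] : exists m', m = m'.+1 by exists m.-1; rewrite prednK.
have : (len_in (pair_pred s s') (rcons t s) <= size (take (k - m) t ++ alt_word s s' m'))%N.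
  apply: len_in_le; first by rewrite all_cat Ptake all_alt_word.
  rewrite [in X in w_eq _ X]Et DE -cats1 -catA; apply: weq_catl.
  apply: weq_trans (weq_sym (weq_catr [:: s] (braid_relation ss))).
  by rewrite -/m em /= -cats1 -catA => lam; rewrite actW_cat /= sWK.
by rewrite size_cat size_takel ?leq_subr //= size_alt_word; lia.
Qed.

Lemma dihedral_root_nonneg s s' u : s != s' -> all (pair_pred s s') u ->
  (len_in (pair_pred s s') u <= len_in (pair_pred s s') (rcons u s))%N ->
  exists x y, [/\ 0 <= x, 0 <= y & actR u (ev s) = comb2 s s' x y].
Proof.
move=> ss Pu hl.
have [t [Pt st ht] nadj] := len_in_word_min Pu.
rewrite -(weq_actR _ ht).
have hl' : (size t <= len_in (pair_pred s s') (rcons t s))%N.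
  rewrite st (len_in_weq _ _ (weq_rcons s ht)) // all_rcons /pair_pred eqxx //.
case/lastP: t => [|t z] in Pt st ht nadj hl' *; first by exists 1, 0; rewrite comb2_ev.
have : pair_pred s s' z by move: Pt; rewrite all_rcons => /andP [].
case/orP => /eqP zs.
  have : (len_in (pair_pred s s') (rcons (rcons t z) s) <= size t)%N.
    apply: len_in_le; first by move: Pt; rewrite all_rcons => /andP [].
    by rewrite zs; apply: weq_sym; apply: weq_rcons2.
  by move: hl'; rewrite size_rcons; lia.
have tE : rcons t z = alt_word s s' (size (rcons t z)).
  by apply: alt_wordP => //; rewrite last_rcons.
have lz : last s' (rcons t z) = s' by rewrite last_rcons zs.
have hlt := alt_word_lt_braid ss Pt nadj lz hl'.
rewrite tE -(comb2_ev s s') alt_coefP //; have [h1 h2] := alt_coef_ge0 ss hlt.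
by exists (alt_coef (A s s') (A s' s) (size (rcons t z)) 1 0).1,
          (alt_coef (A s s') (A s' s) (size (rcons t z)) 1 0).2.
Qed.

(** * Positivity of roots *)

Definition nonneg (c : vec) := forall j, 0 <= c 0 j.
Definition nonpos (c : vec) := forall j, c 0 j <= 0.

Lemma nonneg_nonpos (c : vec) : nonneg c -> nonpos c -> c = 0.
Proof. by move=> h1 h2; apply/rowP => j; rewrite mxE; apply/eqP; rewrite eq_le h1 h2. Qed.

Lemma nonnegN (c : vec) : nonneg (- c) <-> nonpos c.
Proof. by split=> h j; have := h j; rewrite mxE ?oppr_ge0 // => h'; rewrite oppr_ge0. Qed.

(* Deodhar's factorisation [w = v u], with [u] in the parabolic subgroup generated by
   [s, s'] and [len v] minimal subject to [len w = len v + len_in u]. *)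
Lemma dihedral_factorization s s' w t : w_eq (rcons t s') w -> (size t).+1 = len w ->
  let I := pair_pred s s' in
  exists v u, [/\ all I u, w_eq (v ++ u) w, len v + len_in I u = len w,
                  (len v < len w)%N & forall x, I x -> (len v <= len (rcons v x))%N].
Proof.
move=> ht st I.
have Is' : I s' by rewrite /I /pair_pred eqxx orbT.
have lower v u : all I u -> w_eq (v ++ u) w -> (len w <= len v + len_in I u)%N.
  by move=> Pu h; apply: leq_trans (len_cat h) _; rewrite leq_add2l len_le_in.
pose cand (p : seq 'I_n * seq 'I_n) :=
  [/\ all I p.2, w_eq (p.1 ++ p.2) w & len p.1 + len_in I p.2 = len w].
have c0 : cand (t, [:: s']).
  have Ps' : all I [:: s'] by rewrite /= Is'.
  have e : w_eq (t ++ [:: s']) w by rewrite cats1.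
  split => //; apply/eqP; rewrite eqn_leq lower //.
  by have := len_size t; have := @len_in_size I [:: s']; move: st => /=; lia.
have [[v u] [Pu hvu hk] hmin] := ex_minimizer (fun p => len p.1) (ex_intro _ _ c0).
exists v, u; split => //=.
  by have := hmin _ c0; have := len_size t; move: st => /=; lia.
move=> x Ix; rewrite leqNgt; apply/negP => lt.
have e : w_eq (rcons v x ++ x :: u) w.
  by apply: weq_trans hvu; rewrite cat_rcons => lam; rewrite !actW_cat /= sWK.
have Pxu : all I (x :: u) by rewrite /= Ix Pu.
have cx : cand (rcons v x, x :: u).
  split => //=; apply/eqP; rewrite eqn_leq lower //.
  by have := len_in_cons Ix Pu; move: lt hk => /=; lia.
by have := hmin _ cx; rewrite /=; lia.
Qed.

(* Humphreys, Reflection groups and Coxeter groups, Theorem 5.4. *)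
Theorem len_rcons_root_nonneg w s : (len w <= len (rcons w s))%N -> nonneg (actR w (ev s)).
Proof.
move: {2}(len w) (erefl (len w)) => k; elim/ltn_ind: k w s => k IH w s hk hl.
have [t st ht] := len_word w.
case/lastP: t st ht => [|t s'] st ht.
  by move=> j; rewrite -(weq_actR _ ht) /= evE; case: (s == j).
have ss : s != s'.
  apply/eqP => es; subst s'.
  have : (len (rcons w s) <= size t)%N.
    exact: len_le (weq_trans (weq_sym (weq_rcons2 t s)) (weq_rcons s ht)).
  by move: hl st; rewrite size_rcons; lia.
rewrite size_rcons in st.
have [v [u [Pu hvu hk' lvk hv]]] := dihedral_factorization s ht st.
have Is : pair_pred s s' s by rewrite /pair_pred eqxx.
have Is' : pair_pred s s' s' by rewrite /pair_pred eqxx orbT.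
have lvk' : (len v < k)%N by rewrite -hk.
have nv := IH _ lvk' v s erefl (hv s Is).
have nv' := IH _ lvk' v s' erefl (hv s' Is').
have hu : (len_in (pair_pred s s') u <= len_in (pair_pred s s') (rcons u s))%N.
  rewrite leqNgt; apply/negP => lt.
  have : (len (rcons w s) <= len v + len (rcons u s))%N.
    by apply: len_cat; rewrite -rcons_cat; apply: weq_rcons.
  have := @len_le_in (pair_pred s s') (rcons u s); rewrite all_rcons Is Pu => /(_ erefl).
  by move: hl hk' lt; lia.
have [x [y [x0 y0 ex]]] := dihedral_root_nonneg ss Pu hu.
move=> j; rewrite -(weq_actR _ hvu) actR_cat ex /comb2 actR_linear actRZ !mxE.
by rewrite addr_ge0 // mulr_ge0.
Qed.

Lemma len_rcons_root_nonpos w s : (len (rcons w s) < len w)%N -> nonpos (actR w (ev s)).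
Proof.
move=> lt; apply/nonnegN; rewrite -actRN -sR_ev -[sR s _]/(actR [:: s] (ev s)) -actR_cat cats1.
by apply: len_rcons_root_nonneg; rewrite (len_weq (weq_rcons2 w s)) ltnW.
Qed.

Lemma len_rcons_neq w s : len (rcons w s) != len w.
Proof.
apply/eqP => e; have h1 : nonneg (actR w (ev s)) by apply: len_rcons_root_nonneg; rewrite e.
have : nonneg (actR (rcons w s) (ev s)).
  by apply: len_rcons_root_nonneg; rewrite (len_weq (weq_rcons2 w s)) e.
rewrite -cats1 actR_cat /= sR_ev actRN nonnegN => h2.
by move: (actR_ev_neq0 w s); rewrite (nonneg_nonpos h1 h2) eqxx.
Qed.

Lemma root_nonneg_or_nonpos w i : nonneg (actR w (ev i)) \/ nonpos (actR w (ev i)).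
Proof.
case: (leqP (len w) (len (rcons w i))) => h; first by left; apply: len_rcons_root_nonneg.
by right; apply: len_rcons_root_nonpos.
Qed.

Lemma reduced_rcons_root_nonneg w i : len (rcons w i) = (size w).+1 -> nonneg (actR w (ev i)).
Proof. by move=> h; apply: len_rcons_root_nonneg; rewrite h (leq_trans (len_size w)). Qed.

Lemma actR_nonneg w (c : vec) : (forall k, 0 < c 0 k -> nonneg (actR w (ev k))) ->
  nonneg c -> nonneg (actR w c).
Proof.
move=> h hc j; rewrite actR_decomp summxE; apply: sumr_ge0 => k _; rewrite !mxE.
have [->|ck0] := eqVneq (c 0 k) 0; first by rewrite mul0r.
by rewrite mulr_ge0 ?hc // h // lt0r ck0 hc.
Qed.

Lemma actR_nonpos w (c : vec) : (forall k, nonpos (actR w (ev k))) ->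
  nonneg c -> nonpos (actR w c).
Proof.
move=> h hc j; rewrite actR_decomp summxE -oppr_ge0 -sumrN; apply: sumr_ge0 => k _.
by rewrite mxE -mulrN mulr_ge0 // oppr_ge0 h.
Qed.

Lemma longest_root_nonpos w0 i : longest_word A w0 -> nonpos (actR w0 (ev i)).
Proof.
move=> [/reducedP red hmax]; apply: len_rcons_root_nonpos.
have [t [ht st]] := hmax (rcons w0 i); have := len_le ht.
by have := len_rcons_neq w0 i; rewrite red; move: st => /= a /eqP b c; lia.
Qed.

Lemma longest_rev w0 : longest_word A w0 -> longest_word A (rev w0).
Proof.
move=> [/reducedP red hmax]; split; first by apply/reducedP; rewrite len_rev size_rev.
by move=> s0; have [t [h1 h2]] := hmax s0; exists t; rewrite size_rev.
Qed.

Lemma longest_invol w0 : longest_word A w0 -> w_eq (w0 ++ w0) [::].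
Proof.
move=> hw; set z := w0 ++ w0; have [t st ht] := len_word z.
case/lastP: t st ht => [|t i] st ht; first exact: weq_sym.
have hneg : nonpos (actR z (ev i)).
  apply: len_rcons_root_nonpos; rewrite -st size_rcons ltnS.
  exact: len_le (weq_trans (weq_sym (weq_rcons2 t i)) (weq_rcons i ht)).
have hpos : nonneg (actR z (ev i)).
  rewrite /z actR_cat -[actR w0 (ev i)]opprK actRN nonnegN.
  by apply: actR_nonpos => [k|]; [apply: longest_root_nonpos | apply/nonnegN/longest_root_nonpos].
by move: (actR_ev_neq0 z i); rewrite (nonneg_nonpos hpos hneg) eqxx.
Qed.

(** * The roots [beta_j] and the inversion set of [t(lambda_-)] *)

Lemma size_betas w : size (betas A w) = size w.
Proof. by elim: w => //= i w ->. Qed.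

Lemma betas_cat a b : betas A (a ++ b) = map (actR (rev b)) (betas A a) ++ betas A b.
Proof. by elim: a => //= i a ->; rewrite rev_cat actR_cat. Qed.

Lemma nth_betas_catl a b j : (j < size a)%N ->
  nth 0 (betas A (a ++ b)) j = actR (rev b) (nth 0 (betas A a) j).
Proof. by move=> h; rewrite betas_cat nth_cat size_map size_betas h (nth_map 0) ?size_betas. Qed.

Lemma nth_betas_catr a b j : (size a <= j)%N ->
  nth 0 (betas A (a ++ b)) j = nth 0 (betas A b) (j - size a).
Proof. by move=> h; rewrite betas_cat nth_cat size_map size_betas ltnNge h. Qed.

Fixpoint cobetas (w : seq 'I_n) : seq vec :=
  if w is i :: w' then actC (rev w') (ev i) :: cobetas w' else [::].

Lemma betas_split w j : (j < size w)%N -> exists p i q,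
  [/\ w = p ++ i :: q, size p = j, nth 0 (betas A w) j = actR (rev q) (ev i)
    & nth 0 (cobetas w) j = actC (rev q) (ev i)].
Proof.
elim: w j => //= i w IH [|j] hj; first by exists [::], i, w.
have [p [i' [q [-> <- e3 e4]]]] := IH j hj.
by exists (i :: p), i', q.
Qed.

Lemma betas_coroot w j : (j < size w)%N -> coroot (nth 0 (cobetas w) j) (nth 0 (betas A w) j).
Proof. by move=> /betas_split [p [i [q [_ _ -> ->]]]]; apply/coroot_act/coroot_ev. Qed.

Lemma betas_root w j : (j < size w)%N -> is_root A (nth 0 (betas A w) j).
Proof. by move=> /betas_split [p [i [q [_ _ -> _]]]]; exists (rev q), i. Qed.

Lemma reduced_split_nonneg p i q : len (p ++ i :: q) = size (p ++ i :: q) ->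
  nonneg (actR p (ev i)) /\ nonneg (actR (rev q) (ev i)).
Proof.
move=> h; split; apply: reduced_rcons_root_nonneg.
  by rewrite -(size_rcons p i); apply: (@reduced_infix [::] _ q); rewrite /= cat_rcons.
rewrite -(size_rcons (rev q) i); apply: (@reduced_infix [::] _ (rev p)).
by rewrite /= -rev_cons -rev_cat len_rev size_rev.
Qed.

Lemma betas_uniq v j j' : len v = size v -> (j < j')%N -> (j' < size v)%N ->
  nth 0 (betas A v) j != nth 0 (betas A v) j'.
Proof.
move=> red jj hj'.
have [p [i [Q [ev1 sp e1 _]]]] := betas_split (ltn_trans jj hj').
have hQ : (j' - j.+1 < size Q)%N by move: hj'; rewrite ev1 size_cat /= sp; lia.
have [q [i' [r [eQ sq e2 _]]]] := betas_split hQ.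
have e2' : nth 0 (betas A v) j' = actR (rev r) (ev i').
  by rewrite ev1 -cat_rcons nth_betas_catr size_rcons sp // -e2; congr nth; lia.
rewrite e1 e2' eQ rev_cat /= rev_cons -cats1 !actR_cat /=.
apply/eqP => /(congr1 (actR r)); rewrite !actR_Krev => h1.
have h2 : actR (rev q) (ev i) = - ev i' by rewrite -sR_ev -h1 sRK.
have : len (rev v) = size (rev v) by rewrite len_rev size_rev.
rewrite ev1 eQ (_ : rev _ = (rev r ++ [:: i']) ++ (rev q ++ [:: i]) ++ rev p); last first.
  by rewrite rev_cat rev_cons rev_cat rev_cons -!cats1 -!catA.
move/reduced_infix; rewrite cats1 size_rcons => /reduced_rcons_root_nonneg.
by rewrite h2 => /(_ i'); rewrite !mxE eqxx.
Qed.

Lemma reduced_parabolic_letters (S : {set 'I_n}) u : len u = size u -> in_parabolic A S u ->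
  all (fun i => i \in S) u.
Proof.
elim/last_ind: u => // u i IH hred [t [Pt ht]].
have iS : i \in S.
  apply/negPn/negP => iS.
  have hneg : nonpos (actR (rcons u i) (ev i)).
    apply: len_rcons_root_nonpos; rewrite hred size_rcons ltnS (len_weq (weq_rcons2 u i)).
    exact: len_size.
  have := hneg i; rewrite -(weq_actR _ ht) actR_notin ?evE ?eqxx //.
  exact: contra (allP Pt i) iS.
rewrite all_rcons; apply/andP; split => //; apply: IH.
  by apply: (@reduced_infix [::] u [:: i]); rewrite /= cats1.
exists (rcons t i); split; first by rewrite all_rcons; apply/andP.
exact: weq_trans (weq_rcons i ht) (weq_rcons2 u i).
Qed.

Lemma min_length_reduced lam mu v : min_length_word A lam mu v -> len v = size v.
Proof.
move=> [hv hmin]; apply/eqP; rewrite eqn_leq len_size /=.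
by have [t <- ht] := len_word v; apply: hmin; rewrite ht.
Qed.

Lemma min_length_root_nonneg lam mu v i : min_length_word A lam mu v -> lam 0 i = 0 ->
  nonneg (actR v (ev i)).
Proof.
move=> [hv hmin] li; apply/len_rcons_root_nonneg/(leq_trans (len_size v)).
have [t <- ht] := len_word (rcons v i); apply: hmin.
by rewrite ht -cats1 actW_cat /= -hv /Defs.sW li scale0r subr0.
Qed.

Section InversionRoots.
Variables (lam : vec) (vw wSw : seq 'I_n).

Lemma actR_stab_coord t c k : all (fun i => lam 0 i == 0) t -> lam 0 k != 0 ->
  (actR t c) 0 k = c 0 k.
Proof. by move=> Pt lk; apply: actR_notin; apply: contra lk => /(allP Pt). Qed.

Hypothesis vw_reduced : len vw = size vw.
Hypothesis vw_stab_nonneg : forall i, lam 0 i = 0 -> nonneg (actR vw (ev i)).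
Hypothesis wSw_stab : all (fun i => lam 0 i == 0) wSw.

(* A root supported on [S] is sent by [vw] to a positive root, whereas [vw] sends the
   roots attached to its own reduced word to negative roots. *)
Lemma betas_min_length_nonneg j : (j < size vw)%N ->
  nonneg (nth 0 (betas A vw) j) /\
  [exists k, (lam 0 k != 0) && (0 < nth 0 (betas A vw) j 0 k)].
Proof.
move=> /betas_split [p [i [q [ev1 _ -> _]]]].
have [hp hq] : nonneg (actR p (ev i)) /\ nonneg (actR (rev q) (ev i)).
  by apply: reduced_split_nonneg; rewrite -ev1.
split => //; apply: contraT; rewrite negb_exists => /forallP hno.
have : nonneg (actR vw (actR (rev q) (ev i))).
  apply: actR_nonneg => // k pk; apply: vw_stab_nonneg; apply/eqP.
  by have := hno k; rewrite pk andbT negbK.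
rewrite ev1 actR_cat /= actR_Krev sR_ev actRN nonnegN => hn.
by move: (actR_ev_neq0 p i); rewrite (nonneg_nonpos hp hn) eqxx.
Qed.

Lemma betas_prefix_nonneg j : (j < size vw)%N ->
  nonneg (nth 0 (betas A (vw ++ wSw)) j) /\
  [exists k, (lam 0 k != 0) && (0 < nth 0 (betas A (vw ++ wSw)) j 0 k)].
Proof.
move=> hj; have [gn /existsP [k /andP [lk pk]]] := betas_min_length_nonneg hj.
have PS' : all (fun i => lam 0 i == 0) (rev wSw) by rewrite all_rev.
rewrite nth_betas_catl //; split; last by apply/existsP; exists k; rewrite lk actR_stab_coord.
have [p [i [q [_ _ e1 _]]]] := betas_split hj.
case: (root_nonneg_or_nonpos (rev wSw ++ rev q) i); rewrite actR_cat -e1 // => hn.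
by have := hn k; rewrite actR_stab_coord // leNgt pk.
Qed.

Lemma betas_prefix_inj j j' : (j < size vw)%N -> (j' < size (vw ++ wSw))%N ->
  nth 0 (betas A (vw ++ wSw)) j = nth 0 (betas A (vw ++ wSw)) j' -> j = j'.
Proof.
move=> hj hj' e.
have [_ /existsP [k /andP [lk pk]]] := betas_min_length_nonneg hj.
have PS' : all (fun i => lam 0 i == 0) (rev wSw) by rewrite all_rev.
case: (ltnP j' (size vw)) => hj'M.
  move: e; rewrite !nth_betas_catl // => /(can_inj (actR_Krev wSw)) e.
  case: (ltngtP j j') => // lt.
    by have := betas_uniq vw_reduced lt hj'M; rewrite e eqxx.
  by have := betas_uniq vw_reduced lt hj; rewrite e eqxx.
have hj2 : (j' - size vw < size wSw)%N by move: hj'; rewrite size_cat; lia.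
have [p [i [q [ew _ e1 _]]]] := betas_split hj2.
move: e; rewrite nth_betas_catl // nth_betas_catr // e1 => /(congr1 (fun x : vec => x 0 k)).
have Pq : all (fun i => lam 0 i == 0) (rev q).
  by move: wSw_stab; rewrite ew all_cat all_rev /= => /and3P [].
rewrite !actR_stab_coord // evE; case: (eqVneq i k) => [ik|_ h]; last by move: pk; rewrite h ltxx.
by move: wSw_stab lk; rewrite ew all_cat /= ik => /and3P [_ ->].
Qed.

End InversionRoots.

Lemma coroot_nonneg (g c : vec) : 0 < form c c -> coroot g c -> nonneg c -> nonneg g.
Proof.
move=> hf cc nc k; rewrite -(pmulr_rge0 _ hf) cc.
by rewrite mulr_ge0 ?mulr_ge0 ?nc // ltW.
Qed.

Lemma coroot_coord_gt0 (g c : vec) k : 0 < form c c -> coroot g c -> 0 < c 0 k -> 0 < g 0 k.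
Proof. by move=> hf cc ck; rewrite -(pmulr_rgt0 _ hf) cc !mulr_gt0. Qed.

(* An element [(g, r)] of the inversion set of [t(mu)] has [0 < <mu, g>] and
   [r <= <mu, g>]: [r] and [r - <mu, g>] cannot both vanish, since then the
   underlying roots [c] and [-c] would both be positive. *)
Lemma tinv_deg (mu : vec) b : tinv A d mu b -> 0 < pairWC mu b.1 /\ b.2 <= pairWC mu b.1.
Proof.
case: b => g r [[c [rc [cc hc]]] [c' [rc' [cc' hc']]]] /=; rewrite /= in cc hc cc' hc'.
set p := pairWC mu g in hc' *.
have hle : r <= p.
  case: hc' => [|[/eqP]]; first by rewrite oppr_gt0 subr_lt0 => /ltW.
  by rewrite oppr_eq0 subr_eq0 => /eqP ->.
split => //; rewrite ltNge; apply/negP => hp.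
have r0 : r = 0 by case: hc => [|[-> _] //]; lia.
have p0 : p = 0 by lia.
move: hc hc'; rewrite r0 p0 ltxx subrr oppr0 => - [//|[_ [_ pc]]] [//|[_ [_ hn]]].
have e : c' = - c.
  apply: (coroot_inj _ _ cc' (corootN cc)); last rewrite formN; exact: root_form_gt0.
move: hn; rewrite e => /nonnegN hn.
by move: (root_neq0 rc); rewrite (nonneg_nonpos pc hn) eqxx.
Qed.

Lemma aPhi_ge0 (mu : vec) b : tinv A d mu b -> 0 <= aPhi mu b.
Proof.
move=> /tinv_deg [hp hle]; rewrite /aPhi divr_ge0 ?ler0z ?(ltW hp) //.
by rewrite subr_ge0 ler_int.
Qed.

Lemma aPhi_eq0 (mu : vec) b : tinv A d mu b -> aPhi mu b = 0 -> b.2 = pairWC mu b.1.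
Proof.
move=> /tinv_deg [hp _] /eqP; rewrite /aPhi mulf_eq0 invr_eq0 intr_eq0 (gt_eqF hp) orbF.
by rewrite subr_eq0 eqr_int => /eqP.
Qed.

Lemma tinv_of_coroot w0 (lam c g : vec) : longest_word A w0 -> is_root A c -> nonneg c ->
  coroot g c -> 0 < pairWC lam g ->
  let mu := actW w0 lam in let gb := actC (rev w0) g in
  tinv A d mu (gb, pairWC mu gb) /\ pairWC mu gb = pairWC lam g.
Proof.
move=> hw rc nc cc hp mu gb.
have ep : pairWC mu gb = pairWC lam g.
  by rewrite pairWC_actW /gb -actC_cat -rev_cat (weq_actC _ (weq_rev (longest_invol hw))).
have cn : nonpos (actR (rev w0) c).
  by apply: actR_nonpos nc => k; apply/longest_root_nonpos/longest_rev.
have rc' : is_root A (actR (rev w0) c) by apply: root_act.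
have cc' : coroot gb (actR (rev w0) c) by apply: coroot_act.
split => //; split; first by exists (actR (rev w0) c); split; [|split; [|left; rewrite /= ep]].
exists (- actR (rev w0) c); split; [exact: rootN | split; first exact: corootN].
by right; rewrite /= subrr oppr0; split => //; split; [exact: rootN | apply/nonnegN].
Qed.

Section InversionPrefix.
Variables (w0 : seq 'I_n) (lam : vec) (vw wSw : seq 'I_n).
Hypothesis w0_longest : longest_word A w0.
Hypothesis lam_dominant : dominant lam.
Hypothesis vw_min : min_length_word A lam (actW w0 lam) vw.
Hypothesis wSw_longest : longest_parabolic_word A [set i | lam 0 i == 0] wSw.
Local Notation mu := (actW w0 lam).
Local Notation iw := (vw ++ wSw).

Let vw_reduced := min_length_reduced vw_min.
Let vw_stab_nonneg i := @min_length_root_nonneg _ _ _ i vw_min.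

Lemma wSw_stab : all (fun i => lam 0 i == 0) wSw.
Proof.
have [/reducedP red [inpar _]] := wSw_longest.
move/allP: (reduced_parabolic_letters red inpar) => h.
by apply/allP => i /h; rewrite inE.
Qed.

(* The preimage under [Phi] of [(0, beta_j)]. *)
Definition Phi0_preimage (j : nat) : aff n :=
  let gb := actC (rev w0) (nth 0 (cobetas iw) j.-1) in (gb, pairWC mu gb).

Lemma phi_idx_functional y j j' : phi_idx A d w0 iw y j -> phi_idx A d w0 iw y j' ->
  (j <= size vw)%N -> j = j'.
Proof.
move=> [hj cj] [hj' cj'] jM.
have r1 : is_root A (nth 0 (betas A iw) j.-1) by apply: betas_root; lia.
have r2 : is_root A (nth 0 (betas A iw) j'.-1) by apply: betas_root; lia.
have e := coroot_inj (root_form_gt0 r1) (root_form_gt0 r2) cj cj'.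
have h1 : (j.-1 < size vw)%N by lia.
have h2 : (j'.-1 < size iw)%N by lia.
have := betas_prefix_inj vw_reduced vw_stab_nonneg wSw_stab h1 h2 e; lia.
Qed.

Lemma phi_idx_Phi0 y j : tinv A d mu y -> aPhi mu y = 0 -> phi_idx A d w0 iw y j ->
  y = Phi0_preimage j.
Proof.
case: y => g r ty /(aPhi_eq0 ty) /= -> [hj cj].
have hj' : (j.-1 < size iw)%N by lia.
have -> : g = actC (rev w0) (nth 0 (cobetas iw) j.-1).
  rewrite -(coroot_uniq _ cj (betas_coroot hj')) ?actC_revK //.
  exact/negbT/gt_eqF/root_form_gt0/betas_root.
by [].
Qed.

Lemma Phi0_preimageP j : (1 <= j <= size vw)%N ->
  [/\ tinv A d mu (Phi0_preimage j), aPhi mu (Phi0_preimage j) = 0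
    & phi_idx A d w0 iw (Phi0_preimage j) j].
Proof.
move=> hj; have hj1 : (j.-1 < size vw)%N by lia.
have hj2 : (j.-1 < size iw)%N by rewrite size_cat; lia.
have [nb /existsP [k /andP [lk pk]]] := betas_prefix_nonneg vw_reduced vw_stab_nonneg wSw_stab hj1.
have cg := betas_coroot hj2; have fc := root_form_gt0 (betas_root hj2).
have gn := coroot_nonneg fc cg nb.
have gpos : 0 < pairWC lam (nth 0 (cobetas iw) j.-1).
  rewrite /pairWC (bigD1 k) //= ltr_pwDl ?mulr_gt0 ?(coroot_coord_gt0 fc cg) //.
    by rewrite lt0r lk lam_dominant.
  by apply: sumr_ge0 => i _; rewrite mulr_ge0 ?lam_dominant ?gn.
have [tv _] := tinv_of_coroot w0_longest (betas_root hj2) nb cg gpos.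
split => //; first by rewrite /aPhi /= subrr mul0r.
by split; [rewrite size_cat; lia | rewrite /= actC_Krev].
Qed.

Lemma inversion_prefix (tb : seq (aff n)) : card_is (tinv A d mu) (size tb) ->
  (forall k, (1 <= k < size tb)%N -> prec' A d mu w0 iw (nth (0, 0) tb k.-1) (nth (0, 0) tb k)) ->
  (forall b, tinv A d mu b <-> b \in tb) ->
  (size vw <= size tb)%N /\ forall k, (k < size vw)%N -> nth (0, 0) tb k = Phi0_preimage k.+1.
Proof.
move=> hcard hord hmem.
have tb_uniq := card_is_uniq hcard hmem.
have xs_lex i : (i.+1 < size tb)%N -> exists j j',
    [/\ phi_idx A d w0 iw (nth (0, 0) tb i) j, phi_idx A d w0 iw (nth (0, 0) tb i.+1) j' &
     aPhi mu (nth (0, 0) tb i) < aPhi mu (nth (0, 0) tb i.+1) \/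
     aPhi mu (nth (0, 0) tb i) = aPhi mu (nth (0, 0) tb i.+1) /\ (j < j')%N].
  move=> hi; have hi' : (1 <= i.+1 < size tb)%N by lia.
  by have [j [j' [? [? ?]]]] := hord _ hi'; exists j, j'.
have f_ge y : y \in tb -> 0 <= aPhi mu y by move/hmem/aPhi_ge0.
have b_bottom j : (1 <= j <= size vw)%N ->
    [/\ Phi0_preimage j \in tb, aPhi mu (Phi0_preimage j) = 0
      & phi_idx A d w0 iw (Phi0_preimage j) j].
  by move=> /Phi0_preimageP [/hmem].
have bottom_b y j : y \in tb -> aPhi mu y = 0 -> phi_idx A d w0 iw y j -> y = Phi0_preimage j.
  by move/hmem; apply: phi_idx_Phi0.
have J_gt0 y j : phi_idx A d w0 iw y j -> (0 < j)%N by case=> /andP [].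
exact: lex_sorted_prefix tb_uniq xs_lex f_ge b_bottom bottom_b J_gt0 phi_idx_functional.
Qed.

Lemma inversion_prefix_coroot (tb : seq (aff n)) : card_is (tinv A d mu) (size tb) ->
  (forall k, (1 <= k < size tb)%N -> prec' A d mu w0 iw (nth (0, 0) tb k.-1) (nth (0, 0) tb k)) ->
  (forall b, tinv A d mu b <-> b \in tb) ->
  (size vw <= size tb)%N /\
  forall k, (1 <= k <= size vw)%N ->
    coroot (actC w0 (nth (0, 0) tb k.-1).1) (nth 0 (betas A iw) k.-1).
Proof.
move=> hcard hord hmem; have [hM htb] := inversion_prefix hcard hord hmem.
split => // k hk; have hk1 : (k.-1 < size vw)%N by lia.
rewrite htb // prednK; last lia.
by rewrite /Phi0_preimage /= actC_Krev; apply: betas_coroot; rewrite size_cat; lia.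
Qed.

End InversionPrefix.

Lemma size_tbetas phi phic (l : seq (option 'I_n)) : size (tbetas A phi phic l) = size l.
Proof. by elim: l => //= i l ->. Qed.

End CartanMatrix.

Theorem corollary5p6 (n : nat) (A : 'M[int]_n) (d : 'I_n -> int)
    (phi phic : 'rV[int]_n) (w0 : seq 'I_n) (lam : 'rV[int]_n)
    (vw wSw : seq 'I_n) (uv : seq 'I_n) (unu : 'rV[int]_n)
    (l : seq (option 'I_n)) :
  finite_simple_cartan A d ->
  highest_short_root A d phi -> is_coroot_of A d phic phi ->
  longest_word A w0 ->
  dominant lam ->
  let lamm := actW A w0 lam in
  let S := [set i | lam 0 i == 0] in
  min_length_word A lam lamm vw ->
  longest_parabolic_word A S wSw ->
  let iw := vw ++ wSw in
  let M := size vw in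
  let L := size l in
  let tb := tbetas A phi phic l in
  in_Omega A d uv unu ->
  (forall b, wext_act A [::] lamm b = wext_act A uv unu (act_aff A phi phic l b)) ->
  card_is (tinv A d lamm) L ->
  (forall k, (1 <= k < L)%N ->
     prec' A d lamm w0 iw (nth (0, 0) tb k.-1) (nth (0, 0) tb k)) ->
  (forall b, tinv A d lamm b <-> exists2 k, (1 <= k <= L)%N & b = nth (0, 0) tb k.-1) ->
  (M <= L)%N /\
  forall k, (1 <= k <= M)%N ->
    is_coroot_of A d (actC A w0 (nth (0, 0) tb k.-1).1) (nth 0 (betas A iw) k.-1).
Proof.
move=> HC _ _ Hw0 Hdom lamm S Hv HS iw M L tb _ _ Hcard Hord Henum.
case: HC => _ [A_diag [A_offdiag [A_zero_sym [d_gt0 [dA_sym [form_pos_def _]]]]]].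
have stb : size tb = L by apply: size_tbetas.
have tb_mem b : tinv A d lamm b <-> b \in tb.
  rewrite Henum -stb; split => [[k hk ->]|/(nthP (0, 0)) [k hk <-]]; last by exists k.+1.
  have hk1 : (k.-1 < size tb)%N by lia.
  exact: mem_nth.
rewrite -stb in Hcard Hord.
rewrite -stb; exact (inversion_prefix_coroot A_diag dA_sym d_gt0 form_pos_def A_offdiag A_zero_sym
  Hw0 Hdom Hv HS Hcard Hord tb_mem).
Qed.
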